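(* Let $(E\to M,\rho,\langle\cdot,\cdot\rangle,[\cdot,\cdot])$ be a Courant algebroid, let $\mathcal{G}$ be a generalized metric on $E$ with $V_\pm=\ker(\mathcal{G}\mp 1)$, and let $D$ be a generalized connection on $E$ that is metric, i.e. $D\mathcal{G}=0$. Then for all $a_\pm,b_\pm\in\Gamma(V_\pm)$, \[ \mathrm{Ric}_{\mathrm{SSCV}}(a_\mp,b_\pm)=2\,\mathrm{Ric}_{\mathrm{JV}}(a_\mp,b_\pm)=\mathrm{Ric}^\pm_{\mathrm{GF}}(a_\mp,b_\pm)+\mathrm{Ric}^\mp_{\mathrm{GF}}(b_\pm,a_\mp). \]
   Context: A Courant algebroid $(E\to M,\rho,\langle\cdot,\cdot\rangle,[\cdot,\cdot])$ consists of a vector bundle $E$, a nondegenerate symmetric bilinear form $\langle\cdot,\cdot\rangle$ on $E$, a bundle map $\rho:E\to TM$ and a bilinear bracket on $\Gamma(E)$ satisfying $[a,[b,c]]=[[a,b],c]+[b,[a,c]]$, $\mathcal{L}_{\rho a}\langle b,c\rangle=\langle[a,b],c\rangle+\langle b,[a,c]\rangle$, and $2[a,a]=\rho^*d\langle a,a\rangle$ (identifying $E^*\cong E$ via $\langle\cdot,\cdot\rangle$). A generalized connection is a linear operator $D:\Gamma(E)\to\Gamma(E^*\otimes E)$ with $D(fa)=fDa+\rho^*df\otimes a$ and $\rho^*d\langle a,b\rangle=\langle Da,b\rangle+\langle a,Db\rangle$; write $D_ba:=(Da)(b)$, and regard $Da$ as the endomorphism $b\mapsto D_ba$, with $(Da)^*$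 its adjoint with respect to $\langle\cdot,\cdot\rangle$. The naive curvature is $\mathcal{R}_0(a,b)c:=D_aD_bc-D_bD_ac-D_{[a,b]}c$. A generalized metric is an endomorphism $\mathcal{G}$ of $E$ with $\mathcal{G}^2=1$ and $\mathcal{G}$ self-adjoint for $\langle\cdot,\cdot\rangle$; $V_\pm:=\ker(\mathcal{G}\mp1)$, so $E=V_+\oplus V_-$ orthogonally, and $a_\pm:=\tfrac12(1\pm\mathcal{G})a$. $D$ is metric if $D_a(\Gamma(V_\pm))\subseteq\Gamma(V_\pm)$ for all $a$. For metric $D$, define $\mathrm{Ric}^\pm_{\mathrm{GF}}(a_\mp,b_\pm)$ as the trace of the endomorphism $V_\pm\to V_\pm$, $c_\pm\mapsto \mathcal{R}_0(c_\pm,a_\mp)b_\pm$. Define the tensor $\mathcal{R}_{\mathrm{JV}}$ by $\langle\mathcal{R}_{\mathrm{JV}}(a,b)c,e\rangle:=\tfrac12\big(\langle\mathcal{R}_0(a,b)c,e\rangle+\langle\mathcal{R}_0(c,e)a,b\rangle+\langle(Da)^*b,(Dc)^*e\rangle\big)$, and $\mathrm{Ric}_{\mathrm{JV}}(a,b)$ as the trace of the endomorphism $c\mapsto\mathcal{R}_{\mathrm{JV}}(c,a)b$ of $E$. Finally $\mathrm{Ric}_{\mathrm{SSCV}}(a,b):=\mathrm{Ric}_{\mathrm{JV}}(a,b)-\mathrm{Ric}_{\mathrm{JV}}(\mathcal{G}a,\mathcal{G}b)$. *)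

(* Algebraic (Serre--Swan style) rendering of Courant
   algebroids: functions on M are a commutative K-algebra A (K = R for
   C^oo(M)), sections of E are an A-module, vector fields are K-linear
   derivations of A. *)
From HB Require Import structures.
From mathcomp Require Import all_boot all_algebra.
Set Implicit Arguments. Unset Strict Implicit. Unset Printing Implicit Defensive.
Import GRing.Theory.
Local Open Scope ring_scope.

Section Courant.
Variables (K : numFieldType) (A : comUnitAlgType K) (E : lmodType A).

Definition is_derivation (X : A -> A) : Prop :=
  [/\ forall f g, X (f + g) = X f + X g,
      forall (k : K) f, X (k *: f) = k *: X f
    & forall f g, X (f * g) = f * X g + X f * g].

(* Data of a Courant algebroid on the section module E.  [fr]/[fr'] is a
   finite dual frame for the pairing: x = sum_i <x, fr' i> fr i.  Its
   existence is equivalent to E being finitely generated projective with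
   <.,.> nondegenerate (E ~ E^* via <.,.>). *)
Record CAdata := CAData {
  nfr : nat;
  fr  : 'I_nfr -> E;
  fr' : 'I_nfr -> E;
  anchor : E -> A -> A;
  form : E -> E -> A;
  brk : E -> E -> E
}.

Arguments fr : clear implicits.
Arguments fr' : clear implicits.
Variable C : CAdata.
Local Notation "<< a , b >>" := (form C a b).

(* rho^* d f, characterised by << rho^* d f , a >> = rho(a) f *)
Definition rhostar_d (f : A) : E :=
  \sum_i (anchor C (fr C i) f) *: fr' C i.

Definition courant_axioms : Prop :=
  (forall a, is_derivation (anchor C a)) /\
      (forall f a b g, anchor C (f *: a + b) g = f * anchor C a g + anchor C b g) /\
      (forall a b, << a, b >> = << b, a >>) /\
      (forall f a b c, << f *: a + b, c >> = f * << a, c >> + << b, c >>) /\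
      (forall x, x = \sum_i << x, fr' C i >> *: fr C i) /\
      (forall (k : K) a a' b, brk C (k%:A *: a + a') b = k%:A *: brk C a b + brk C a' b) /\
      (forall (k : K) a b b', brk C a (k%:A *: b + b') = k%:A *: brk C a b + brk C a b') /\
      (forall a b c, brk C a (brk C b c)
                     = brk C (brk C a b) c + brk C b (brk C a c)) /\
      (forall a b c, anchor C a << b, c >> = << brk C a b, c >> + << b, brk C a c >>) /\
      (forall a, brk C a a *+ 2 = rhostar_d << a, a >>).

(* Generalized connection, written Dc x y := D_x y = (D y)(x). *)
Definition gen_connection (Dc : E -> E -> E) : Prop :=
  [/\ (forall f x x' y, Dc (f *: x + x') y = f *: Dc x y + Dc x' y),
      (forall x y y', Dc x (y + y') = Dc x y + Dc x y'),
      (forall x f y, Dc x (f *: y) = f *: Dc x y + anchor C x f *: y)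
    & (forall c a b, anchor C c << a, b >> = << Dc c a, b >> + << a, Dc c b >>)].

Definition gen_metric (G : E -> E) : Prop :=
  [/\ (forall f a b, G (f *: a + b) = f *: G a + G b),
      (forall a, G (G a) = a)
    & (forall a b, << G a, b >> = << a, G b >>)].

Definition inV (G : E -> E) (s : bool) (a : E) : Prop :=
  G a = (if s then a else - a).

Definition proj (G : E -> E) (s : bool) (a : E) : E :=
  (2%:R)^-1 *: (if s then a + G a else a - G a).

Definition metric_conn (G : E -> E) (Dc : E -> E -> E) : Prop :=
  forall s a b, inV G s b -> inV G s (Dc a b).

Definition R0 (Dc : E -> E -> E) (a b c : E) : E :=
  Dc a (Dc b c) - Dc b (Dc a c) - Dc (brk C a b) c.

Definition trE (T : E -> E) : A := \sum_i << T (fr C i), fr' C i >>.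

(* trace of an endomorphism of V_s, via the dual frame (proj s fr, proj s fr') of V_s *)
Definition trV (G : E -> E) (s : bool) (T : E -> E) : A :=
  \sum_i << T (proj G s (fr C i)), proj G s (fr' C i) >>.

Definition RicGF (G : E -> E) (Dc : E -> E -> E) (s : bool) (a b : E) : A :=
  trV G s (fun c => R0 Dc c a b).

(* (D a)^* b : adjoint of the endomorphism c |-> D_c a *)
Definition Dadj (Dc : E -> E -> E) (a b : E) : E :=
  \sum_i << b, Dc (fr C i) a >> *: fr' C i.

(* << R_JV(a,b) c , e >> *)
Definition RJVpair (Dc : E -> E -> E) (a b c e : E) : A :=
  (2%:R)^-1 * (<< R0 Dc a b c, e >> + << R0 Dc c e a, b >>
               + << Dadj Dc a b, Dadj Dc c e >>).

Definition RicJV (Dc : E -> E -> E) (a b : E) : A :=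
  \sum_i RJVpair Dc (fr C i) a b (fr' C i).

Definition RicSSCV (G : E -> E) (Dc : E -> E -> E) (a b : E) : A :=
  RicJV Dc a b - RicJV Dc (G a) (G b).

End Courant.

(* Everything is computed against the dual frame (fr, fr'), so each Ricci
   tensor is a trace sum_i H (fr i) (fr' i) of an A-bilinear form H.  The
   integrand (c, e) |-> <R_JV(c, a) b, e> of Ric_JV(a, b) is A-bilinear: the
   non-tensorial parts of R_0 and of (D c)^* cancel, and the failure of the
   anchor to be a bracket morphism annihilates E by the Jacobi identity.  As G
   is self-adjoint with G^2 = 1, the trace splits into traces over V_+ and V_-.
   Take b in V_s and a in V_(-s); the metric connection preserves both.  On
   V_s only <R_0(c, a) b, e> survives, giving Ric^s_GF(a, b).  On V_(-s) only
   <R_0(b, e) c, a> survives; it equals <R_0(e, b) a, c> because R_0 is skew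
   in its last two slots and <b, e> = 0, and transposing the trace gives
   Ric^(-s)_GF(b, a).  The first equality holds because (G a, G b) is (a, b)
   up to the sign of one entry and Ric_JV is odd in each argument. *)

From Pilot Require Import Defs.
From HB Require Import structures.
From mathcomp Require Import all_boot all_algebra ring.
Import GRing.Theory.
Local Open Scope ring_scope.
Set Implicit Arguments. Unset Strict Implicit.

(* Lets [ring] use equational hypotheses: apply once per hypothesis, then [ring]. *)
Lemma eq_by_lincomb (R : comPzRingType) (l r a1 a2 k : R) :
  a1 = a2 -> l - r = k * (a1 - a2) -> l = r.
Proof. by move=> -> /eqP; rewrite subrr mulr0 subr_eq0 => /eqP. Qed.

Lemma natr2_unit (K : numFieldType) (A : comUnitAlgType K) : (2%:R : A) \is a GRing.unit.
Proof. by rewrite -(rmorph_nat (in_alg A)) rmorph_unit // unitfE Num.Theory.pnatr_eq0. Qed.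

Lemma scale_half_double (K : numFieldType) (A : comUnitAlgType K) (V : lmodType A)
  (v : V) : (2%:R : A)^-1 *: (v + v) = v.
Proof. by rewrite -mulr2n -[v *+ 2]scaler_nat scalerA mulVr ?natr2_unit // scale1r. Qed.

Section CourantAlgebroid.
Variables (K : numFieldType) (A : comUnitAlgType K) (E : lmodType A) (C : CAdata E).
Hypothesis HC : courant_axioms C.

Local Notation "<< a , b >>" := (Defs.form C a b).
Local Notation rho := (anchor C).
Local Notation br := (brk C).
Local Notation rs := (rhostar_d C).
Local Notation x_ := (@fr _ _ _ C).
Local Notation xd := (@fr' _ _ _ C).

Lemma form_sym x y : << x, y >> = << y, x >>.
Proof. by case: HC => _ [_ [+ _]]. Qed.

Lemma form_linl f x y z : << f *: x + y, z >> = f * << x, z >> + << y, z >>.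
Proof. by case: HC => _ [_ [_ [+ _]]]. Qed.

Lemma formDl x y z : << x + y, z >> = << x, z >> + << y, z >>.
Proof. by rewrite -{1}[x]scale1r form_linl mul1r. Qed.

Lemma form0l z : << 0, z >> = 0.
Proof. by apply: (addrI << 0, z >>); rewrite -formDl !addr0. Qed.

Lemma formZl f x z : << f *: x, z >> = f * << x, z >>.
Proof. by rewrite -[f *: x]addr0 form_linl form0l addr0. Qed.

Lemma formNl x z : << - x, z >> = - << x, z >>.
Proof. by rewrite -scaleN1r formZl mulN1r. Qed.

Lemma formMnl x z n : << x *+ n, z >> = << x, z >> *+ n.
Proof. by rewrite -scaler_nat formZl mulr_natl. Qed.

Lemma formDr x y z : << z, x + y >> = << z, x >> + << z, y >>.
Proof. by rewrite !(form_sym z) formDl. Qed.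

Lemma form0r z : << z, 0 >> = 0.
Proof. by rewrite form_sym form0l. Qed.

Lemma formZr f x z : << z, f *: x >> = f * << z, x >>.
Proof. by rewrite !(form_sym z) formZl. Qed.

Lemma formNr x z : << z, - x >> = - << z, x >>.
Proof. by rewrite !(form_sym z) formNl. Qed.

Definition formE := (formDl, formZl, formNl, form0l, formDr, formZr, formNr, form0r).

Lemma form_suml (I : Type) (r : seq I) (P : pred I) (F : I -> E) z :
  << \sum_(i <- r | P i) F i, z >> = \sum_(i <- r | P i) << F i, z >>.
Proof. by elim/big_rec2: _ => [|i y1 y2 _ <-]; rewrite ?form0l ?formDl. Qed.

Lemma form_sumr (I : Type) (r : seq I) (P : pred I) (F : I -> E) z :
  << z, \sum_(i <- r | P i) F i >> = \sum_(i <- r | P i) << z, F i >>.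
Proof. by rewrite form_sym form_suml; under eq_bigr do rewrite form_sym. Qed.

Lemma frame_expand x : x = \sum_i << x, xd i >> *: x_ i.
Proof. by case: HC => _ [_ [_ [_ [+ _]]]]. Qed.

Lemma form_inj x y : (forall z, << x, z >> = << y, z >>) -> x = y.
Proof.
by move=> eq_xy; rewrite (frame_expand x) (frame_expand y); under eq_bigr do rewrite eq_xy.
Qed.

Lemma frame_expand_dual x : x = \sum_i << x, x_ i >> *: xd i.
Proof.
apply: form_inj => z; rewrite form_suml {1}(frame_expand z) form_sumr.
by apply: eq_bigr => i _; rewrite formZl formZr mulrC (form_sym (xd i)).
Qed.

Lemma anchor_derivation x : is_derivation (rho x).
Proof. by case: HC. Qed.

Lemma anchDr x f g : rho x (f + g) = rho x f + rho x g.
Proof. by case: (anchor_derivation x). Qed.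

Lemma anchMr x f g : rho x (f * g) = f * rho x g + rho x f * g.
Proof. by case: (anchor_derivation x). Qed.

Lemma anch_linl f a b g : rho (f *: a + b) g = f * rho a g + rho b g.
Proof. by case: HC => _ [+ _]. Qed.

Lemma anchDl a b g : rho (a + b) g = rho a g + rho b g.
Proof. by rewrite -{1}[a]scale1r anch_linl mul1r. Qed.

Lemma anch0l g : rho 0 g = 0.
Proof. by apply: (addrI (rho 0 g)); rewrite -anchDl !addr0. Qed.

Lemma anchZl f a g : rho (f *: a) g = f * rho a g.
Proof. by rewrite -[f *: a]addr0 anch_linl anch0l addr0. Qed.

Lemma anch_suml (I : Type) (r : seq I) (P : pred I) (F : I -> E) g :
  rho (\sum_(i <- r | P i) F i) g = \sum_(i <- r | P i) rho (F i) g.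
Proof. by elim/big_rec2: _ => [|i y1 y2 _ <-]; rewrite ?anch0l ?anchDl. Qed.

Lemma form_rhostar_d f z : << rs f, z >> = rho z f.
Proof.
rewrite /rhostar_d form_suml {2}(frame_expand z) anch_suml.
by apply: eq_bigr => i _; rewrite formZl anchZl mulrC form_sym.
Qed.

Lemma rhostar_dD f g : rs (f + g) = rs f + rs g.
Proof. by apply: form_inj => z; rewrite formDl !form_rhostar_d anchDr. Qed.

Lemma rhostar_dM f g : rs (f * g) = f *: rs g + g *: rs f.
Proof. by apply: form_inj => z; rewrite !formE !form_rhostar_d anchMr; ring. Qed.

Lemma brk_linl (k : K) a a' b : br (k%:A *: a + a') b = k%:A *: br a b + br a' b.
Proof. by case: HC => _ [_ [_ [_ [_ [+ _]]]]]. Qed.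

Lemma brk_linr (k : K) a b b' : br a (k%:A *: b + b') = k%:A *: br a b + br a b'.
Proof. by case: HC => _ [_ [_ [_ [_ [_ [+ _]]]]]]. Qed.

Lemma brk_jacobi a b c : br a (br b c) = br (br a b) c + br b (br a c).
Proof. by case: HC => _ [_ [_ [_ [_ [_ [_ [+ _]]]]]]]. Qed.

Lemma brk_invariance a b c : rho a << b, c >> = << br a b, c >> + << b, br a c >>.
Proof. by case: HC => _ [_ [_ [_ [_ [_ [_ [_ [+ _]]]]]]]]. Qed.

Lemma brk_self a : br a a *+ 2 = rs << a, a >>.
Proof. by case: HC => _ [_ [_ [_ [_ [_ [_ [_ [_ +]]]]]]]]. Qed.

Lemma brkDl a a' b : br (a + a') b = br a b + br a' b.
Proof. by have := brk_linl 1 a a' b; rewrite !scale1r. Qed.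

Lemma brkDr a b b' : br a (b + b') = br a b + br a b'.
Proof. by have := brk_linr 1 a b b'; rewrite !scale1r. Qed.

Lemma brk0l b : br 0 b = 0.
Proof. by apply: (addrI (br 0 b)); rewrite -brkDl !addr0. Qed.

Lemma brk0r a : br a 0 = 0.
Proof. by apply: (addrI (br a 0)); rewrite -brkDr !addr0. Qed.

Lemma brkNl a b : br (- a) b = - br a b.
Proof. by have := brk_linl (-1) a 0 b; rewrite !addr0 brk0l addr0 !scaleN1r. Qed.

Lemma brkNr a b : br a (- b) = - br a b.
Proof. by have := brk_linr (-1) a b 0; rewrite !addr0 brk0r addr0 !scaleN1r. Qed.

Lemma brkZr x f y : br x (f *: y) = f *: br x y + rho x f *: y.
Proof.
apply: form_inj => z.
have inv_x u : << br x u, z >> = rho x << u, z >> - << u, br x z >>.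
  by rewrite brk_invariance addrK.
by rewrite inv_x !formE inv_x anchMr; ring.
Qed.

Lemma brk_symm x y : br x y + br y x = rs << x, y >>.
Proof.
rewrite -[LHS]scale_half_double -[RHS]scale_half_double; congr (_ *: _).
apply: form_inj => z.
have pair_self u := congr1 (Defs.form C ^~ z) (brk_self u).
move: (pair_self (x + y)) (pair_self x) (pair_self y) => /=.
rewrite !brkDl !brkDr !formMnl !formE !form_rhostar_d !anchDr (form_sym y x).
move=> hxy hx hy.
apply: (eq_by_lincomb hxy (k := 1)); apply: (eq_by_lincomb hx (k := -1)).
by apply: (eq_by_lincomb hy (k := -1)); ring.
Qed.

Lemma brk_swap x y : br y x = rs << x, y >> - br x y.
Proof. by rewrite -brk_symm [br x y + _]addrC addrK. Qed.

Lemma brkZl f x y : br (f *: x) y = f *: br x y - rho y f *: x + << x, y >> *: rs f.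
Proof.
rewrite (brk_swap y (f *: x)) brkZr (brk_swap x y) formZr rhostar_dM (form_sym y).
by apply: form_inj => z; rewrite !formE; ring.
Qed.

Definition brkE := (brkDl, brkDr, brkNl, brkNr, brk0l, brk0r, brkZr, brkZl).

Definition anchor_defect x y g := rho x (rho y g) - rho y (rho x g) - rho (br x y) g.

Definition jacobiator x y z := br x (br y z) - br (br x y) z - br y (br x z).

Lemma jacobiator0 x y z : jacobiator x y z = 0.
Proof. by rewrite /jacobiator brk_jacobi addrAC addrK subrr. Qed.

Lemma jacobiatorZr x y g z :
  jacobiator x y (g *: z) = g *: jacobiator x y z + anchor_defect x y g *: z.
Proof.
by apply: form_inj => w; rewrite /jacobiator /anchor_defect !brkE !formE; ring.
Qed.

Lemma anchor_defect_scale x y g (z : E) : anchor_defect x y g *: z = 0.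
Proof. by have := jacobiatorZr x y g z; rewrite !jacobiator0 scaler0 add0r. Qed.

Lemma anchor_defectD x y f g :
  anchor_defect x y (f + g) = anchor_defect x y f + anchor_defect x y g.
Proof. by rewrite /anchor_defect !anchDr; ring. Qed.

Lemma anchor_defectM x y f g :
  anchor_defect x y (f * g) = f * anchor_defect x y g + anchor_defect x y f * g.
Proof. by rewrite /anchor_defect !anchMr !anchDr !anchMr; ring. Qed.

Lemma anchor_defect_form x y z w : anchor_defect x y << z, w >> = 0.
Proof.
have defect0 : anchor_defect x y 0 = 0.
  by apply: (addrI (anchor_defect x y 0)); rewrite -anchor_defectD !addr0.
rewrite (frame_expand z) form_suml.
elim/big_rec: _ => [//|i g _ IH]; rewrite anchor_defectD IH addr0 formZl anchor_defectM.
by rewrite [_ * anchor_defect _ _ _]mulrC -!formZl !anchor_defect_scale !form0l addr0.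
Qed.

Definition form_trace (H : E -> E -> A) : A := \sum_i H (x_ i) (xd i).

Section FormTrace.
Variable H : E -> E -> A.
Hypothesis H_bilinear : bilinear_for *%R *%R H.

Lemma bilinear0l e : H 0 e = 0.
Proof.
have := H_bilinear.1 e 1 0 0; rewrite /= scale1r addr0 mul1r => H0.
by apply: (addrI (H 0 e)); rewrite -H0 addr0.
Qed.

Lemma bilinear0r c : H c 0 = 0.
Proof.
have := H_bilinear.2 c 1 0 0; rewrite /= scale1r addr0 mul1r => H0.
by apply: (addrI (H c 0)); rewrite -H0 addr0.
Qed.

Lemma bilinearDl c c' e : H (c + c') e = H c e + H c' e.
Proof. by rewrite -{1}[c]scale1r H_bilinear.1 /= mul1r. Qed.

Lemma bilinear_suml (I : Type) (r : seq I) (P : pred I) (g : I -> A) (y : I -> E) e :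
  H (\sum_(i <- r | P i) g i *: y i) e = \sum_(i <- r | P i) g i * H (y i) e.
Proof. by elim/big_rec2: _ => [|i y1 y2 _ <-]; rewrite ?bilinear0l ?H_bilinear.1. Qed.

Lemma bilinear_sumr (I : Type) (r : seq I) (P : pred I) (g : I -> A) (y : I -> E) c :
  H c (\sum_(i <- r | P i) g i *: y i) = \sum_(i <- r | P i) g i * H c (y i).
Proof. by elim/big_rec2: _ => [|i y1 y2 _ <-]; rewrite ?bilinear0r ?H_bilinear.2. Qed.

Lemma form_trace_adjoint (T : E -> E) : (forall u v, << T u, v >> = << u, T v >>) ->
  form_trace (fun c e => H c (T e)) = form_trace (fun c e => H (T c) e).
Proof.
move=> T_selfadj; rewrite /form_trace.
under eq_bigr do rewrite (frame_expand_dual (T (xd _))) bilinear_sumr.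
rewrite exchange_big /=; apply: eq_bigr => j _; rewrite -bilinear_suml.
congr (H _ _); rewrite [RHS]frame_expand; apply: eq_bigr => i _.
by rewrite T_selfadj form_sym.
Qed.

Lemma form_trace_swap : form_trace (fun c e => H e c) = form_trace H.
Proof.
rewrite /form_trace; under eq_bigr do rewrite {1}(frame_expand (xd _)) bilinear_suml.
rewrite exchange_big /=; apply: eq_bigr => j _.
rewrite [in RHS](frame_expand (xd j)) bilinear_sumr; apply: eq_bigr => i _.
by rewrite form_sym.
Qed.

Lemma form_trace_decompose (P Q : E -> E) : (forall u, P u + Q u = u) ->
  form_trace H = form_trace (fun c e => H (P c) e) + form_trace (fun c e => H (Q c) e).
Proof.
move=> PQ; rewrite /form_trace -big_split.
by apply: eq_bigr => i _ /=; rewrite -bilinearDl PQ.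
Qed.

End FormTrace.

Lemma form_trace_proj (H : E -> E -> A) (P : E -> E) :
  bilinear_for *%R *%R H -> linear P -> (forall u v, << P u, v >> = << u, P v >>) ->
  (forall u, P (P u) = P u) ->
  form_trace (fun c e => H (P c) (P e)) = form_trace (fun c e => H (P c) e).
Proof.
move=> H_bilinear P_linear P_selfadj P_idem.
have HP_bilinear : bilinear_for *%R *%R (fun c e => H (P c) e).
  by split=> [e f u v | c f u v] /=; rewrite ?P_linear H_bilinear.
rewrite (form_trace_adjoint HP_bilinear P_selfadj).
by rewrite /form_trace; under eq_bigr do rewrite P_idem.
Qed.

Section Connection.
Variable Dc : E -> E -> E.
Hypothesis HD : gen_connection C Dc.

Local Notation R0 := (Defs.R0 C Dc).
Local Notation Dadj := (Defs.Dadj C Dc).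

Lemma D_linl f x x' y : Dc (f *: x + x') y = f *: Dc x y + Dc x' y.
Proof. by case: HD. Qed.

Lemma DDr x y y' : Dc x (y + y') = Dc x y + Dc x y'.
Proof. by case: HD. Qed.

Lemma DZr x f y : Dc x (f *: y) = f *: Dc x y + rho x f *: y.
Proof. by case: HD. Qed.

Lemma D_metric c a b : rho c << a, b >> = << Dc c a, b >> + << a, Dc c b >>.
Proof. by case: HD. Qed.

Lemma DDl x x' y : Dc (x + x') y = Dc x y + Dc x' y.
Proof. by rewrite -{1}[x]scale1r D_linl scale1r. Qed.

Lemma D0l y : Dc 0 y = 0.
Proof. by apply: (addrI (Dc 0 y)); rewrite -DDl !addr0. Qed.

Lemma DZl f x y : Dc (f *: x) y = f *: Dc x y.
Proof. by rewrite -[f *: x]addr0 D_linl D0l addr0. Qed.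

Lemma DNl x y : Dc (- x) y = - Dc x y.
Proof. by rewrite -scaleN1r DZl scaleN1r. Qed.

Lemma D0r x : Dc x 0 = 0.
Proof. by apply: (addrI (Dc x 0)); rewrite -DDr !addr0. Qed.

Lemma DNr x y : Dc x (- y) = - Dc x y.
Proof. by apply: (addrI (Dc x y)); rewrite -DDr !subrr D0r. Qed.

Lemma D_suml (I : Type) (r : seq I) (P : pred I) (F : I -> E) y :
  Dc (\sum_(i <- r | P i) F i) y = \sum_(i <- r | P i) Dc (F i) y.
Proof. by elim/big_rec2: _ => [|i y1 y2 _ <-]; rewrite ?D0l ?DDl. Qed.

Definition DE := (DDl, DZl, DNl, D0l, DDr, DZr, DNr, D0r).

Lemma Dadj_pair c a z : << Dadj c a, z >> = << a, Dc z c >>.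
Proof.
rewrite /Defs.Dadj form_suml {2}(frame_expand z) D_suml form_sumr.
by apply: eq_bigr => i _; rewrite formZl DZl formZr mulrC form_sym.
Qed.

Lemma DadjDl c c' a : Dadj (c + c') a = Dadj c a + Dadj c' a.
Proof. by apply: form_inj => z; rewrite formDl !Dadj_pair DDr formDr. Qed.

Lemma DadjZl f c a : Dadj (f *: c) a = f *: Dadj c a + << c, a >> *: rs f.
Proof.
apply: form_inj => z.
by rewrite !formE !Dadj_pair form_rhostar_d DZr !formE (form_sym a c); ring.
Qed.

Lemma DadjNl c a : Dadj (- c) a = - Dadj c a.
Proof. by apply: form_inj => z; rewrite formNl !Dadj_pair DNr formNr. Qed.

Lemma DadjDr c a a' : Dadj c (a + a') = Dadj c a + Dadj c a'.
Proof. by apply: form_inj => z; rewrite formDl !Dadj_pair formDl. Qed.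

Lemma DadjZr f c a : Dadj c (f *: a) = f *: Dadj c a.
Proof. by apply: form_inj => z; rewrite formZl !Dadj_pair formZl. Qed.

Lemma DadjNr c a : Dadj c (- a) = - Dadj c a.
Proof. by apply: form_inj => z; rewrite formNl !Dadj_pair formNl. Qed.

Lemma R0Dl x x' y c : R0 (x + x') y c = R0 x y c + R0 x' y c.
Proof. by apply: form_inj => z; rewrite /Defs.R0 !brkE !DE !formE; ring. Qed.

Lemma R0Zl f x y c : R0 (f *: x) y c = f *: R0 x y c - << x, y >> *: Dc (rs f) c.
Proof. by apply: form_inj => z; rewrite /Defs.R0 !brkE !DE !formE; ring. Qed.

Lemma R0Nl x y c : R0 (- x) y c = - R0 x y c.
Proof. by apply: form_inj => z; rewrite /Defs.R0 !brkE !DE !formE; ring. Qed.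

Lemma R0Dm x y y' c : R0 x (y + y') c = R0 x y c + R0 x y' c.
Proof. by apply: form_inj => z; rewrite /Defs.R0 !brkE !DE !formE; ring. Qed.

Lemma R0Zm x f y c : R0 x (f *: y) c = f *: R0 x y c.
Proof. by apply: form_inj => z; rewrite /Defs.R0 !brkE !DE !formE; ring. Qed.

Lemma R0Nm x y c : R0 x (- y) c = - R0 x y c.
Proof. by apply: form_inj => z; rewrite /Defs.R0 !brkE !DE !formE; ring. Qed.

Lemma R0Dr x y c c' : R0 x y (c + c') = R0 x y c + R0 x y c'.
Proof. by apply: form_inj => z; rewrite /Defs.R0 !DE !formE; ring. Qed.

Lemma R0Zr x y f c : R0 x y (f *: c) = f *: R0 x y c.
Proof.
rewrite -[RHS]addr0 -(anchor_defect_scale x y f c).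
by apply: form_inj => z; rewrite /Defs.R0 /anchor_defect !DE !formE; ring.
Qed.

Lemma R0Nr x y c : R0 x y (- c) = - R0 x y c.
Proof. by apply: form_inj => z; rewrite /Defs.R0 !DE !formE; ring. Qed.

Lemma R0_skew x y c a : << R0 x y c, a >> = - << c, R0 x y a >>.
Proof.
apply/eqP; rewrite -addr_eq0 -(anchor_defect_form x y c a).
rewrite /anchor_defect !D_metric !anchDr !D_metric /Defs.R0 !formE.
by apply/eqP; ring.
Qed.

Lemma R0_antisym x y c : << x, y >> = 0 -> R0 x y c = - R0 y x c.
Proof.
have rhostar_d0 : rs 0 = 0 by apply: (addrI (rs 0)); rewrite -rhostar_dD !addr0.
move=> xy0; have := brk_symm x y; rewrite xy0 rhostar_d0 => /eqP.
rewrite addr_eq0 => /eqP brk_xy.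
by apply: form_inj => z; rewrite /Defs.R0 brk_xy DNl !formE; ring.
Qed.

(* The defect terms of R0Zl and DadjZl cancel. *)
Lemma RJVpair_bilinear a b : bilinear_for *%R *%R (fun c e => RJVpair C Dc c a b e).
Proof.
split=> [e f u v | c f u v] /=; rewrite /RJVpair.
  rewrite R0Dl R0Zl R0Dr R0Zr DadjDl DadjZl !formE.
  by rewrite (form_sym (rs f)) (Dadj_pair b e) (form_sym e); ring.
by rewrite R0Dm R0Zm DadjDr DadjZr !formE; ring.
Qed.

Lemma R0_pair_bilinear (P : E -> E) y a : linear P -> (forall c, << P c, y >> = 0) ->
  bilinear_for *%R *%R (fun c e => << R0 (P c) y a, P e >>).
Proof.
move=> P_linear Py0; split=> [e f u v | c f u v] /=; rewrite P_linear.
  by rewrite R0Dl R0Zl Py0 scale0r subr0 !formE.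
by rewrite formDr formZr.
Qed.

Lemma RicJV_Nl a b : RicJV C Dc (- a) b = - RicJV C Dc a b.
Proof.
rewrite /RicJV -sumrN; apply: eq_bigr => i _.
by rewrite /RJVpair R0Nm DadjNr !formE; ring.
Qed.

Lemma RicJV_Nr a b : RicJV C Dc a (- b) = - RicJV C Dc a b.
Proof.
rewrite /RicJV -sumrN; apply: eq_bigr => i _.
by rewrite /RJVpair R0Nr R0Nl DadjNl !formE; ring.
Qed.

Section GeneralizedMetric.
Variable G : E -> E.
Hypothesis HG : gen_metric C G.

Lemma G_linear : linear G.
Proof. by case: HG. Qed.

Lemma G_invol u : G (G u) = u.
Proof. by case: HG. Qed.

Lemma G_selfadj u v : << G u, v >> = << u, G v >>.
Proof. by case: HG. Qed.

Lemma GB u v : G (u - v) = G u - G v.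
Proof. exact: (zmod_morphism_linear G_linear u v). Qed.

Lemma GZ f u : G (f *: u) = f *: G u.
Proof. exact: (scalable_linear G_linear f u). Qed.

Lemma GD u v : G (u + v) = G u + G v.
Proof. by rewrite -{1}[u]scale1r G_linear scale1r. Qed.

Lemma proj_linear s : linear (proj G s).
Proof.
move=> f u v; rewrite /proj.
by case: s; rewrite G_linear; apply: form_inj => z; rewrite !formE; ring.
Qed.

Lemma proj_selfadj s u v : << proj G s u, v >> = << u, proj G s v >>.
Proof. by rewrite /proj; case: s; rewrite !formE G_selfadj; ring. Qed.

Lemma inV_proj s u : inV G s (proj G s u).
Proof.
rewrite /inV /proj GZ; case: s => /=; rewrite ?GB ?GD G_invol; first by rewrite addrC.
by rewrite -scalerN opprB.
Qed.

Lemma proj_id s c : inV G s c -> proj G s c = c.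
Proof. by rewrite /inV /proj => ->; case: s; rewrite ?opprK scale_half_double. Qed.

Lemma proj_idem s u : proj G s (proj G s u) = proj G s u.
Proof. exact/proj_id/inV_proj. Qed.

Lemma proj_add s u : proj G s u + proj G (~~ s) u = u.
Proof.
rewrite /proj -scalerDr.
by case: s => /=; rewrite addrACA ?subrr ?addNr addr0 scale_half_double.
Qed.

Lemma proj_eq0 s v : inV G (~~ s) v -> proj G s v = 0.
Proof. by rewrite /inV /proj; case: s => /= ->; rewrite subrr scaler0. Qed.

Lemma inV_orth s u v : inV G s u -> inV G (~~ s) v -> << u, v >> = 0.
Proof. by move=> Hu Hv; rewrite -(proj_id Hu) proj_selfadj proj_eq0 // form0r. Qed.

Lemma inVB s u v : inV G s u -> inV G s v -> inV G s (u - v).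
Proof. by rewrite /inV GB => -> ->; case: s => //=; rewrite opprB opprK addrC. Qed.

Hypothesis HM : metric_conn G Dc.

Lemma R0_inV s x y c : inV G s c -> inV G s (R0 x y c).
Proof. by move=> Hc; rewrite /Defs.R0; do 2?apply: inVB; do 2?apply: HM. Qed.

Lemma Dadj_orth s x y : inV G s x -> inV G (~~ s) y -> Dadj x y = 0.
Proof.
move=> Hx Hy; apply: form_inj => z; rewrite Dadj_pair form0l form_sym.
exact: inV_orth (HM z Hx) Hy.
Qed.

Section OppositeEigenspaces.
Variables (s : bool) (a b : E).
Hypotheses (Ha : inV G (~~ s) a) (Hb : inV G s b).

Lemma RicSSCV_twice_RicJV : RicSSCV C G Dc a b = 2%:R * RicJV C Dc a b.
Proof.
rewrite /RicSSCV mulr_natl mulr2n; move: Ha Hb; rewrite /inV.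
by case: s => /= -> ->; rewrite ?RicJV_Nl ?RicJV_Nr opprK.
Qed.

Lemma RJVpair_b_side c e : inV G s c -> inV G s e ->
  RJVpair C Dc c a b e = 2%:R^-1 * << R0 c a b, e >>.
Proof.
move=> Hc He; rewrite /RJVpair (inV_orth (R0_inV b e Hc) Ha) (Dadj_orth Hc Ha).
by rewrite form0l !addr0.
Qed.

Lemma RJVpair_a_side c e : inV G (~~ s) c -> inV G (~~ s) e ->
  RJVpair C Dc c a b e = 2%:R^-1 * << R0 e b a, c >>.
Proof.
move=> Hc He; rewrite /RJVpair (inV_orth (R0_inV c a Hb) He) (Dadj_orth Hb He).
rewrite form0r add0r addr0 R0_skew (R0_antisym _ (inV_orth Hb He)).
by rewrite formNr opprK form_sym.
Qed.

Lemma twice_RicJV_split :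
  2%:R * RicJV C Dc a b = RicGF C G Dc s a b + RicGF C G Dc (~~ s) b a.
Proof.
have RJV_bilinear := RJVpair_bilinear a b.
have proj_trace t :=
  form_trace_proj RJV_bilinear (proj_linear t) (proj_selfadj t) (proj_idem t).
have Hb' : inV G (~~ ~~ s) b by rewrite negbK.
have GF_bilinear := R0_pair_bilinear a (proj_linear (~~ s))
  (fun c => inV_orth (inV_proj (~~ s) c) Hb').
have b_side : form_trace (fun c e => RJVpair C Dc (proj G s c) a b (proj G s e))
    = 2%:R^-1 * RicGF C G Dc s a b.
  rewrite /form_trace /RicGF /trV mulr_sumr; apply: eq_bigr => i _.
  exact: RJVpair_b_side (inV_proj _ _) (inV_proj _ _).
have a_side : form_trace (fun c e => RJVpair C Dc (proj G (~~ s) c) a b (proj G (~~ s) e))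
    = 2%:R^-1 * RicGF C G Dc (~~ s) b a.
  transitivity (2%:R^-1 * form_trace (fun c e =>
      << R0 (proj G (~~ s) e) b a, proj G (~~ s) c >>)).
    rewrite /form_trace mulr_sumr; apply: eq_bigr => i _.
    exact: RJVpair_a_side (inV_proj _ _) (inV_proj _ _).
  by rewrite (form_trace_swap GF_bilinear).
have -> : RicJV C Dc a b = form_trace (fun c e => RJVpair C Dc c a b e) by [].
rewrite (form_trace_decompose RJV_bilinear (proj_add s)) -!proj_trace b_side a_side.
by rewrite -mulrDr mulrA mulrV ?natr2_unit // mul1r.
Qed.

End OppositeEigenspaces.
End GeneralizedMetric.
End Connection.
End CourantAlgebroid.

Theorem theorem2p4 (K : numFieldType) (A : comUnitAlgType K) (E : lmodType A)
  (C : @CAdata K A E) (G : E -> E) (Dc : E -> E -> E) :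
  courant_axioms C -> gen_metric C G -> gen_connection C Dc ->
  metric_conn G Dc ->
  forall (s : bool) (a b : E), inV G (~~ s) a -> inV G s b ->
    RicSSCV C G Dc a b = 2%:R * RicJV C Dc a b /\
    2%:R * RicJV C Dc a b = RicGF C G Dc s a b + RicGF C G Dc (~~ s) b a.
Proof.
move=> HC HG HD HM s a b Ha Hb; split.
  exact: (RicSSCV_twice_RicJV HC HD Ha Hb).
exact: (twice_RicJV_split HC HD HG HM Ha Hb).
Qed.
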